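(* Let $p\ge K\ge 2$ and $n\ge K$. Let $A=[A_1,\dots,A_K]\in\mathbb{R}^{p\times K}$ have nonnegative entries with each column summing to $1$, and let $W\in\mathbb{R}^{K\times n}$ have nonnegative entries with each column summing to $1$. Set $D_0=AW$ and assume $\mathrm{rank}(D_0)=K$, with the $K$ nonzero singular values of $D_0$ distinct. Let $a_i^T$ denote the $i$-th row of $A$ and assume every $a_i\neq 0$. Let $\xi_1,\dots,\xi_K$ be the left singular vectors of $D_0$ associated with its $K$ nonzero singular values, in decreasing order of the singular values, and let $\Xi=[\xi_1,\dots,\xi_K]$. Let $V=[V_1,\dots,V_K]\in\mathbb{R}^{K\times K}$ be the matrix with $\Xi=AV$. Assume that all entries of $\xi_1$ and of $V_1$ are positive. Define $R\in\mathbb{R}^{p\times(K-1)}$ by $R(i,k)=\xi_{k+1}(i)/\xi_1(i)$ and $V^*\in\mathbb{R}^{K\times(K-1)}$ by $V^*(j,k)=V_{k+1}(j)/V_1(j)$, for $1\le i\le p$, $1\le j\le K$, $1\le k\le K-1$. Let $r_1,\dots,r_p\in\mathbb{R}^{K-1}$ be the rows of $R$, let $v_1^*,\dots,v_K^*\in\mathbb{R}^{K-1}$ be the rows of $V^*$, and let $\Pi=[\mathrm{diag}(\xi_1)]^{-1}A\,\mathrm{diag}(V_1)\in\mathbb{R}^{p\times K}$ with rows $\pi_1,\dots,\pi_p$. Then: (i) $v_1^*,\dots,v_K^*$ are affinely independent, so they are the vertices of a non-degenerate simplex $\mathcal{S}_K^*\subset\mathbb{R}^{K-1}$; (ii) for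 every $1\le i\le p$, $\pi_i$ is a weight vector (nonnegative entries summing to $1$), with $\pi_i(j)>0$ if and only if $a_i(j)>0$, and $r_i=\sum_{j=1}^K\pi_i(j)v_j^*$; in particular, $r_i$ lies in $\mathcal{S}_K^*$, in the relative interior of the face of $\mathcal{S}_K^*$ spanned by $\{v_j^*: a_i(j)>0\}$; (iii) for every $1\le i\le p$ and $1\le k\le K$, $r_i=v_k^*$ if and only if word $i$ is an anchor word of topic $k$, i.e. $a_i(j)=0$ for all $j\ne k$.
   Context: This is the noiseless topic model (pLSI): column $k$ of $A$ is the word distribution of topic $k$ over a vocabulary of $p$ words, and column $j$ of $W$ is the topic mixing proportion of document $j$. Word $i$ is called an anchor word of topic $k$ if $A(i,k)\ne 0$ and $A(i,\ell)=0$ for all $\ell\ne k$. A weight vector is a vector with nonnegative entries summing to $1$. Since $\mathrm{rank}(D_0)=K$, the column span of $\Xi$ equals that of $A$, so the $K\times K$ matrix $V$ with $\Xi=AV$ exists, is unique and is nonsingular. *)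

From HB Require Import structures.
From mathcomp Require Import all_boot all_order all_algebra.
From mathcomp Require Import reals.
Set Implicit Arguments. Unset Strict Implicit. Unset Printing Implicit Defensive.
Import Order.TTheory GRing.Theory Num.Theory.
Local Open Scope ring_scope.

Section Defs.
Variable R : realType.

Definition col_stochastic (m q : nat) (M : 'M[R]_(m, q)) : Prop :=
  (forall i j, 0 <= M i j) /\ (forall j, \sum_i M i j = 1).

Definition weight_vector (m : nat) (x : 'rV[R]_m) : Prop :=
  (forall j, 0 <= x 0 j) /\ \sum_j x 0 j = 1.

(* Xi (p x K) is the matrix whose columns are left singular vectors of D
   associated with K nonzero singular values s 0 > s 1 > ... > s (K-1) > 0,
   i.e. there are right singular vectors H (orthonormal columns, too) with
   D eta_k = s_k xi_k and D^T xi_k = s_k eta_k. *)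
Definition left_singular_vectors (p n K : nat) (D : 'M[R]_(p, n))
    (Xi : 'M[R]_(p, K)) (s : 'I_K -> R) : Prop :=
  exists H : 'M[R]_(n, K),
    [/\ Xi^T *m Xi = 1%:M /\ H^T *m H = 1%:M,
        (forall k, D *m col k H = s k *: col k Xi),
        (forall k, D^T *m col k Xi = s k *: col k H),
        (forall k1 k2 : 'I_K, (k1 < k2)%N -> s k2 < s k1) &
        (forall k, 0 < s k)].

Definition affinely_independent (m d : nat) (v : 'I_m -> 'rV[R]_d) : Prop :=
  forall c : 'I_m -> R, \sum_j c j = 0 -> \sum_j c j *: v j = 0 ->
    forall j, c j = 0.

Definition in_simplex (m d : nat) (v : 'I_m -> 'rV[R]_d) (x : 'rV[R]_d) :=
  exists w : 'I_m -> R, (forall j, 0 <= w j) /\ \sum_j w j = 1 /\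
    x = \sum_j w j *: v j.

(* x lies in the relative interior of the face spanned by {v j | S j}
   (v affinely independent): a convex combination with positive weights
   exactly on S. *)
Definition in_relint_face (m d : nat) (v : 'I_m -> 'rV[R]_d) (S : pred 'I_m)
    (x : 'rV[R]_d) :=
  exists w : 'I_m -> R, (forall j, S j -> 0 < w j) /\
    (forall j, ~~ S j -> w j = 0) /\ \sum_j w j = 1 /\
    x = \sum_j w j *: v j.

Definition anchor_word (p K : nat) (A : 'M[R]_(p, K)) (i : 'I_p) (k : 'I_K) :=
  A i k != 0 /\ forall l, l != k -> A i l = 0.

End Defs.

From HB Require Import structures.
From mathcomp Require Import all_boot all_order all_algebra.
From mathcomp Require Import reals.
From mathcomp Require Import ring.
Import Order.TTheory GRing.Theory Num.Theory.
Local Open Scope ring_scope.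

(* Since Xi = A V, word i's ratio vector r_i = (xi_(l+1)(i) / xi_1(i))_l is an
   average of the ratio vectors v*_j = (V_(l+1)(j) / V_1(j))_l of the rows of V,
   with weights pi_i(j) = a_i(j) V_1(j) / xi_1(i), which sum to 1 because
   xi_1(i) = sum_j a_i(j) V_1(j).  These weights are nonnegative with the support
   of a_i.  V is invertible (Xi has orthonormal columns), so the v*_j are affinely
   independent; hence barycentric coordinates are unique, and r_i = v*_k exactly
   when pi_i is the k-th unit vector, i.e. when word i is an anchor word of k. *)

Section RatioCoordinates.
Context {F : fieldType}.

Definition ratio_mx {m k : nat} (M : 'M[F]_(m, k.+1)) : 'M[F]_(m, k) :=
  \matrix_(i, l) (M i (lift ord0 l) / M i ord0).

Definition ratio_weights {p K k : nat} (A : 'M[F]_(p, K)) (V : 'M[F]_(K, k.+1))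
    : 'M[F]_(p, K) :=
  \matrix_(i, j) (A i j * V j ord0 / (A *m V) i ord0).

Lemma orthonormal_factor_unitmx {p K : nat} {A Xi : 'M[F]_(p, K)} {U : 'M[F]_K} :
  Xi^T *m Xi = 1%:M -> Xi = A *m U -> U \in unitmx.
Proof.
move=> XtX XiE; have : (Xi^T *m A) *m U = 1%:M by rewrite -mulmxA -XiE.
by case/mulmx1_unit.
Qed.

Lemma invmx_diag_mx {n : nat} (d : 'rV[F]_n) :
  (forall i, d 0 i != 0) -> invmx (diag_mx d) = diag_mx (\row_i (d 0 i)^-1).
Proof.
move=> d_neq0; set D' := diag_mx (\row_i _).
have D'D : D' *m diag_mx d = 1%:M.
  by rewrite mulmx_diag; apply/matrixP => i j; rewrite !mxE mulVf.
have [_ Du] := mulmx1_unit D'D.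
by rewrite -[LHS]mul1mx -D'D -mulmxA mulmxV // mulmx1.
Qed.

Context {p K k : nat} {A : 'M[F]_(p, K)} {V : 'M[F]_(K, k.+1)}.

Lemma diag_scaled_mxE :
    (forall i, (A *m V) i ord0 != 0) ->
  invmx (diag_mx (col ord0 (A *m V))^T) *m A *m diag_mx (col ord0 V)^T
    = ratio_weights A V.
Proof.
move=> AV_neq0; rewrite invmx_diag_mx => [|i]; last by rewrite 2!mxE.
apply/matrixP => i j; rewrite mul_diag_mx mul_mx_diag !mxE.
by rewrite [RHS]mulrC mulrA.
Qed.

Lemma sum_ratio_weights i :
  (A *m V) i ord0 != 0 -> \sum_j ratio_weights A V i j = 1.
Proof.
under eq_bigr do rewrite mxE.
by rewrite -mulr_suml mxE => /mulfV.
Qed.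

Lemma ratio_weights_eq0 i j :
    (A *m V) i ord0 != 0 -> V j ord0 != 0 ->
  (ratio_weights A V i j == 0) = (A i j == 0).
Proof.
by move=> AV_neq0 Vj_neq0; rewrite mxE !mulf_eq0 invr_eq0 (negPf AV_neq0)
  (negPf Vj_neq0) !orbF.
Qed.

Lemma row_ratio_mx_mul i :
    (A *m V) i ord0 != 0 -> (forall j, V j ord0 != 0) ->
  row i (ratio_mx (A *m V))
    = \sum_j ratio_weights A V i j *: row j (ratio_mx V).
Proof.
rewrite mxE => AV_neq0 V_neq0; apply/rowP => l.
rewrite summxE !mxE mulr_suml; apply: eq_bigr => j _; rewrite !mxE.
by field; rewrite V_neq0 AV_neq0.
Qed.

End RatioCoordinates.

Lemma ratio_weights_gt0 {R : realFieldType} {p K k : nat}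
    {A : 'M[R]_(p, K)} {V : 'M[R]_(K, k.+1)} i j :
  0 < (A *m V) i ord0 -> 0 < V j ord0 ->
  (0 < ratio_weights A V i j) = (0 < A i j).
Proof.
by move=> AV_gt0 Vj_gt0; rewrite mxE pmulr_lgt0 ?invr_gt0 // pmulr_lgt0.
Qed.

Section AffineIndependence.
Variable R : realType.

Lemma row_free_ratio_affinely_independent (m k : nat) (V : 'M[R]_(m, k.+1)) :
    row_free V -> (forall j, V j ord0 != 0) ->
  affinely_independent (fun j => row j (ratio_mx V)).
Proof.
move=> Vfree V_neq0 c sum_c0 sum_cv0 j.
pose d := \row_j (c j / V j ord0).
(* d V collects the sum of the c j in column 0 and sum_j c j v_j elsewhere *)
have dV0 : d *m V = 0.
  apply/rowP => l; rewrite !mxE; case: (unliftP ord0 l) => [l'|] ->.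
    transitivity ((\sum_j c j *: row j (ratio_mx V)) 0 l').
      by rewrite summxE; apply: eq_bigr => i _; rewrite !mxE mulrAC mulrA.
    by rewrite sum_cv0 mxE.
  by rewrite -[RHS]sum_c0; apply: eq_bigr => i _; rewrite mxE divfK.
have /rowP/(_ j)/eqP : d = 0 by apply: (row_free_inj Vfree); rewrite mul0mx.
by rewrite !mxE mulf_eq0 invr_eq0 (negPf (V_neq0 j)) orbF => /eqP.
Qed.

Lemma affinely_independent_eq_vertex (m d : nat) (v : 'I_m -> 'rV[R]_d)
    (w : 'I_m -> R) (k : 'I_m) :
    affinely_independent v -> \sum_j w j = 1 ->
  \sum_j w j *: v j = v k <-> forall j, j != k -> w j = 0.
Proof.
move=> v_aff sum_w1.
have sum_delta (T : lmodType R) (f : 'I_m -> T) :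
    \sum_j (j == k)%:R *: f j = f k.
  rewrite (bigD1 k) //= eqxx scale1r big1 ?addr0 // => j /negPf ->.
  by rewrite scale0r.
split => [wv j jk | w0].
  suff /(_ j) : forall j, w j - (j == k)%:R = 0 by rewrite (negPf jk) subr0.
  apply: v_aff.
    rewrite sumrB sum_w1 (bigD1 k) //= eqxx big1 ?addr0 ?subrr // => i.
    by move/negPf ->.
  under eq_bigr do rewrite scalerBl.
  by rewrite sumrB wv sum_delta subrr.
have wk1 : w k = 1.
  by rewrite -sum_w1 (bigD1 k) //= big1 ?addr0 // => j /w0.
rewrite (bigD1 k) //= wk1 scale1r big1 ?addr0 // => j /w0 ->.
by rewrite scale0r.
Qed.

End AffineIndependence.

Lemma anchor_word_ratio_weights {R : realType} {p K k : nat}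
    {A : 'M[R]_(p, K)} {V : 'M[R]_(K, k.+1)} i kk :
    (A *m V) i ord0 != 0 -> (forall j, V j ord0 != 0) ->
  anchor_word A i kk <-> forall j, j != kk -> ratio_weights A V i j = 0.
Proof.
move=> AV_neq0 V_neq0; have w_eq0 j := ratio_weights_eq0 i j AV_neq0 (V_neq0 j).
split => [[_ A0] j /A0/eqP | w0]; first by rewrite -w_eq0 => /eqP.
split => [|j /w0/eqP]; last by rewrite w_eq0 => /eqP.
apply: contra_neq (@oner_neq0 R) => Akk0.
rewrite -(sum_ratio_weights i AV_neq0) (bigD1 kk) //= big1 => [|j /w0 //].
by rewrite addr0; apply/eqP; rewrite w_eq0 Akk0.
Qed.

(* K = k.+1 topics; K-1 = k coordinates; column index k+1 is lift ord0 k. *)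
Theorem lemma2 (R : realType) (p n k : nat)
  (A : 'M[R]_(p, k.+1)) (W : 'M[R]_(k.+1, n))
  (Xi : 'M[R]_(p, k.+1)) (s : 'I_k.+1 -> R) (V : 'M[R]_(k.+1, k.+1)) :
  (1 <= k)%N -> (k.+1 <= p)%N -> (k.+1 <= n)%N ->
  col_stochastic A -> col_stochastic W ->
  \rank (A *m W) = k.+1 ->
  (forall i, row i A != 0) ->
  left_singular_vectors (A *m W) Xi s ->
  Xi = A *m V ->
  (forall i, 0 < Xi i ord0) -> (forall j, 0 < V j ord0) ->
  let Rm : 'M[R]_(p, k) := \matrix_(i, l) (Xi i (lift ord0 l) / Xi i ord0) in
  let Vs : 'M[R]_(k.+1, k) := \matrix_(j, l) (V j (lift ord0 l) / V j ord0) in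
  let Pi : 'M[R]_(p, k.+1) :=
    invmx (diag_mx (col ord0 Xi)^T) *m A *m diag_mx (col ord0 V)^T in
  let vs := fun j : 'I_k.+1 => row j Vs in
  [/\ affinely_independent vs,
      (forall i : 'I_p,
        [/\ weight_vector (row i Pi),
            (forall j, (0 < Pi i j) = (0 < A i j)),
            row i Rm = \sum_j Pi i j *: vs j,
            in_simplex vs (row i Rm) &
            in_relint_face vs (fun j => 0 < A i j) (row i Rm)]) &
      (forall (i : 'I_p) (kk : 'I_k.+1), row i Rm = vs kk <-> anchor_word A i kk)].
Proof.
move=> _ _ _ [A_ge0 _] _ _ _ [_ [[XtX _] _ _ _ _]] XiE.
have V_unit := orthonormal_factor_unitmx XtX XiE; subst Xi.
move=> AV_gt0 V_gt0 Rm Vs Pi vs.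
have AV_neq0 i := lt0r_neq0 (AV_gt0 i); have V_neq0 j := lt0r_neq0 (V_gt0 j).
have -> : Pi = ratio_weights A V by apply: diag_scaled_mxE.
have vs_aff : affinely_independent vs.
  by apply: row_free_ratio_affinely_independent; rewrite ?row_free_unit.
have Rm_bary i : row i Rm = \sum_j ratio_weights A V i j *: vs j.
  exact: row_ratio_mx_mul.
have w_sum1 i := sum_ratio_weights i (AV_neq0 i).
have w_gt0 i j := ratio_weights_gt0 i j (AV_gt0 i) (V_gt0 j).
have w_ge0 i j : 0 <= ratio_weights A V i j.
  by rewrite mxE divr_ge0 ?mulr_ge0 ?A_ge0 ?ltW.
split => // [i | i kk]; first split => //.
- split => [j|]; first by rewrite mxE.
  by under eq_bigr do rewrite mxE.
- by exists (ratio_weights A V i).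
- exists (ratio_weights A V i); split => [j|]; first by rewrite w_gt0.
  split => // j; rewrite lt_def A_ge0 andbT negbK => /eqP Aij0.
  by apply/eqP; rewrite ratio_weights_eq0 ?Aij0.
rewrite Rm_bary affinely_independent_eq_vertex //.
by apply: iff_sym; apply: anchor_word_ratio_weights.
Qed.
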